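(* Let $0<\alpha\le\delta<\infty$ and $0<\gamma<\tfrac13$. The map $\mathcal R^a_1(a)_k=\frac{1}{k+1}\sum_{n=0}^ka_na_{k-n}$ ($k\in\mathbb N_0$) maps $X_{\alpha,\delta}$ into itself and is continuous with respect to the metric $d(a,b)=\sum_{k\ge0}(\gamma/\delta)^k|a_k-b_k|$.
   Context: $X_{\alpha,\delta}$ is the set of real sequences $a=(a_k)_{k\ge0}$ with $a_0=1$, $a_1=\alpha$, $0\le a_k\le\delta^k$ for $k\ge2$. *)

From Stdlib Require Import Reals.
From Coquelicot Require Import Coquelicot.
Open Scope R_scope.

Definition X (alpha delta : R) (a : nat -> R) : Prop :=
  a 0%nat = 1 /\ a 1%nat = alpha /\
  forall k : nat, (2 <= k)%nat -> 0 <= a k /\ a k <= delta ^ k.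

Definition Ra1 (a : nat -> R) : nat -> R :=
  fun k => / (INR k + 1) * sum_f_R0 (fun n => a n * a (k - n)%nat) k.

Definition dist_gd (gamma delta : R) (a b : nat -> R) : R :=
  Series (fun k => (gamma / delta) ^ k * Rabs (a k - b k)).

From Stdlib Require Import Reals Lra Lia.
From Coquelicot Require Import Coquelicot.
Open Scope R_scope.

(* Write q = gamma/delta.  Since |a_m| <= delta^m on X, the identity
   a_n a_m - b_n b_m = (a_n - b_n) a_m + b_n (a_m - b_m) gives
   q^(n+m) |a_n a_m - b_n b_m| <= c_n gamma^m + gamma^n c_m with c_k = q^k |a_k - b_k|.
   Summing over n + m = k (the factor 1/(k+1) only helps) and then over k, the
   Cauchy product of the series of c with the geometric series yields
   d(R a, R b) <= 2 d(a, b) / (1 - gamma): the map is Lipschitz, hence continuous. *)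

Definition pow_bounded (delta : R) (a : nat -> R) : Prop :=
  forall k, 0 <= a k <= delta ^ k.

Definition convolution (u v : nat -> R) (k : nat) : R :=
  sum_f_R0 (fun n => u n * v (k - n)%nat) k.

Definition dist_term (gamma delta : R) (a b : nat -> R) (k : nat) : R :=
  (gamma / delta) ^ k * Rabs (a k - b k).

Lemma X_pow_bounded alpha delta a :
  0 <= alpha <= delta -> X alpha delta a -> pow_bounded delta a.
Proof.
  intros Had [a0 [a1 a_ge2]] [|[|k]].
  - rewrite a0; simpl; lra.
  - rewrite a1; simpl; lra.
  - apply a_ge2; lia.
Qed.

Lemma pow_div_mul_pow x y n : y <> 0 -> (x / y) ^ n * y ^ n = x ^ n.
Proof. intros. rewrite <- Rpow_mult_distr. f_equal. field. assumption. Qed.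

Lemma inv_INR_succ_bounds k : 0 < / (INR k + 1) <= 1.
Proof.
  pose proof (pos_INR k).
  split.
  - apply Rinv_0_lt_compat; lra.
  - rewrite <- Rinv_1. apply Rinv_le_contravar; lra.
Qed.

Lemma Ra1_pow_bounded delta a : pow_bounded delta a -> pow_bounded delta (Ra1 a).
Proof.
  intros a_bounded k. unfold Ra1.
  pose proof (inv_INR_succ_bounds k) as [inv_pos _].
  split.
  - apply Rmult_le_pos; [lra|]. apply cond_pos_sum. intro n.
    apply Rmult_le_pos; apply a_bounded.
  - apply Rle_trans with (/ (INR k + 1) * sum_f_R0 (fun _ => delta ^ k) k).
    + apply Rmult_le_compat_l; [lra|]. apply sum_Rle. intros n Hn.
      replace (delta ^ k) with (delta ^ n * delta ^ (k - n)) by (rewrite <- pow_add; f_equal; lia).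
      apply Rmult_le_compat; apply a_bounded.
    + rewrite sum_cte, S_INR. right. field. pose proof (pos_INR k). lra.
Qed.

Lemma Ra1_X alpha delta a :
  0 <= alpha <= delta -> X alpha delta a -> X alpha delta (Ra1 a).
Proof.
  intros Had Xa.
  pose proof (Ra1_pow_bounded _ _ (X_pow_bounded _ _ _ Had Xa)) as R_bounded.
  destruct Xa as [a0 [a1 _]].
  split; [|split].
  - unfold Ra1; simpl. rewrite a0. field.
  - unfold Ra1; simpl. rewrite a0, a1. field.
  - intros k _. apply R_bounded.
Qed.

Section Ra1_Lipschitz.

Variables (delta gamma : R) (a b : nat -> R).
Hypotheses (delta_pos : 0 < delta) (gamma_ge0 : 0 <= gamma) (gamma_lt1 : gamma < 1).
Hypotheses (a_bounded : pow_bounded delta a) (b_bounded : pow_bounded delta b).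

Let c := dist_term gamma delta a b.
Let g := fun k => gamma ^ k.

Lemma ratio_pow_ge0 k : 0 <= (gamma / delta) ^ k.
Proof. apply pow_le. unfold Rdiv. apply Rmult_le_pos; [lra|]. apply Rlt_le, Rinv_0_lt_compat; lra. Qed.

Lemma dist_term_ge0 k : 0 <= c k.
Proof. apply Rmult_le_pos; [apply ratio_pow_ge0 | apply Rabs_pos]. Qed.

Lemma dist_term_le_pow k : c k <= gamma ^ k.
Proof.
  unfold c, dist_term.
  rewrite <- (pow_div_mul_pow gamma delta k) by lra.
  apply Rmult_le_compat_l; [apply ratio_pow_ge0|].
  pose proof (a_bounded k). pose proof (b_bounded k).
  apply Rabs_le; lra.
Qed.

Lemma is_series_dist_term : is_series c (dist_gd gamma delta a b).
Proof.
  apply Series_correct.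
  apply (@ex_series_le R_AbsRing R_CompleteNormedModule) with (b := g).
  - intro k. change (Rabs (c k) <= gamma ^ k).
    rewrite Rabs_pos_eq by apply dist_term_ge0. apply dist_term_le_pow.
  - exists (/ (1 - gamma)). apply is_series_geom. rewrite Rabs_pos_eq; lra.
Qed.

Lemma dist_term_prod_le n m :
  (gamma / delta) ^ (n + m) * Rabs (a n * a m - b n * b m) <= c n * g m + g n * c m.
Proof.
  pose proof (a_bounded m). pose proof (b_bounded n).
  assert (split_bound : Rabs (a n * a m - b n * b m) <=
            Rabs (a n - b n) * delta ^ m + delta ^ n * Rabs (a m - b m)).
  { replace (a n * a m - b n * b m) with ((a n - b n) * a m + b n * (a m - b m)) by ring.
    eapply Rle_trans; [apply Rabs_triang|].
    rewrite !Rabs_mult, (Rabs_pos_eq (a m)), (Rabs_pos_eq (b n)) by lra.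
    apply Rplus_le_compat.
    - apply Rmult_le_compat_l; [apply Rabs_pos | lra].
    - apply Rmult_le_compat_r; [apply Rabs_pos | lra]. }
  eapply Rle_trans; [apply Rmult_le_compat_l; [apply ratio_pow_ge0 | exact split_bound]|].
  right. unfold c, g, dist_term.
  rewrite pow_add, <- (pow_div_mul_pow gamma delta n), <- (pow_div_mul_pow gamma delta m) by lra.
  ring.
Qed.

Lemma dist_term_Ra1_le k :
  dist_term gamma delta (Ra1 a) (Ra1 b) k <= convolution c g k + convolution g c k.
Proof.
  unfold dist_term, Ra1.
  rewrite <- Rmult_minus_distr_l, <- minus_sum, Rabs_mult.
  pose proof (inv_INR_succ_bounds k) as inv_bounds.
  rewrite (Rabs_pos_eq (/ _)) by lra.
  set (d n := a n * a (k - n)%nat - b n * b (k - n)%nat).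
  apply Rle_trans with ((gamma / delta) ^ k * sum_f_R0 (fun n => Rabs (d n)) k).
  { apply Rmult_le_compat_l; [apply ratio_pow_ge0|].
    apply Rle_trans with (Rabs (sum_f_R0 d k)); [|apply Rsum_abs].
    rewrite <- (Rmult_1_l (Rabs (sum_f_R0 d k))) at 2.
    apply Rmult_le_compat_r; [apply Rabs_pos | lra]. }
  unfold convolution. rewrite scal_sum, <- plus_sum.
  apply sum_Rle. intros n Hn.
  replace ((gamma / delta) ^ k) with ((gamma / delta) ^ (n + (k - n))) by (f_equal; lia).
  rewrite Rmult_comm. apply dist_term_prod_le.
Qed.

Lemma dist_gd_Ra1_le :
  dist_gd gamma delta (Ra1 a) (Ra1 b) <= 2 / (1 - gamma) * dist_gd gamma delta a b.
Proof.
  set (D := dist_gd gamma delta a b).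
  assert (geom : is_series g (/ (1 - gamma))).
  { apply is_series_geom. rewrite Rabs_pos_eq; lra. }
  assert (conv : is_series (fun k => convolution c g k + convolution g c k)
                           (D * / (1 - gamma) + / (1 - gamma) * D)).
  { apply (is_series_plus (fun k => convolution c g k) (fun k => convolution g c k));
      apply is_series_mult_pos;
      auto using is_series_dist_term, dist_term_ge0 with real;
      intro k; apply pow_le; lra. }
  unfold dist_gd at 1.
  eapply Rle_trans; [apply Series_le|].
  - intro k. split; [apply Rmult_le_pos; [apply ratio_pow_ge0 | apply Rabs_pos]|].
    apply dist_term_Ra1_le.
  - eexists; exact conv.
  - rewrite (is_series_unique _ _ conv). right. field. lra.
Qed.

End Ra1_Lipschitz.

Theorem lemma8 (alpha delta gamma : R)
  (Halpha : 0 < alpha) (Had : alpha <= delta)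
  (Hg0 : 0 < gamma) (Hg1 : gamma < 1 / 3) :
  (forall a, X alpha delta a -> X alpha delta (Ra1 a)) /\
  (forall a, X alpha delta a ->
     forall eps, 0 < eps ->
       exists eta, 0 < eta /\
         forall b, X alpha delta b ->
           dist_gd gamma delta a b < eta ->
           dist_gd gamma delta (Ra1 a) (Ra1 b) < eps).
Proof.
  assert (alpha_delta : 0 <= alpha <= delta) by lra.
  split.
  - intros a. apply Ra1_X, alpha_delta.
  - intros a Xa eps eps_pos.
    exists (eps * (1 - gamma) / 2). split; [apply Rdiv_lt_0_compat; [apply Rmult_lt_0_compat|]; lra|].
    intros b Xb dist_lt.
    eapply Rle_lt_trans.
    { apply dist_gd_Ra1_le; try lra; eapply X_pow_bounded; eassumption. }
    replace eps with (2 / (1 - gamma) * (eps * (1 - gamma) / 2)) by (field; lra).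
    apply Rmult_lt_compat_l; [apply Rdiv_lt_0_compat|]; lra.
Qed.
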